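(* An exceptional graph has no cycle whose length is divisible by $3$.
   Context: All graphs are finite and simple. Let $r$ be a degree-$2$ vertex of a graph $G$. $G$ is an exceptional graph with root $r$ if there is a sequence $(G_0,x_0,y_0),\ldots,(G_n,x_n,y_n)$, $n\ge 0$, with $G_0=K_{2,3}$, $G_n=G$, such that for each $i$ the vertices $r,x_i,y_i$ are distinct degree-$2$ vertices of $G_i$, and for each $i<n$: (1) if $x_iy_i\notin E(G_i)$, $G_{i+1}$ is obtained from $G_i$ by adding a new path of length $3$ joining $x_i$ and $y_i$; (2) if $x_iy_i\in E(G_i)$, $G_{i+1}$ is obtained from $G_i$ either by adding a new vertex $v$ with $N_{G_{i+1}}(v)=N_{G_i}(w)$ for some $w\in\{x_i,y_i\}$, or by adding a new $4$-cycle $abcda$ and the edges $ax_i,cy_i$. A graph is exceptional if it is an exceptional graph with some root. *)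

From mathcomp Require Import all_boot.
Set Implicit Arguments. Unset Strict Implicit. Unset Printing Implicit Defensive.

(* A finite simple graph is a symmetric irreflexive relation e on a finType T.
   For V : {set T}, G[V] denotes the induced subgraph on V. *)

Section Exceptional.
Variables (T : finType) (e : rel T).

Definition nbr (V : {set T}) (v : T) : {set T} := [set u in V | e v u].
Definition deg (V : {set T}) (v : T) : nat := #|nbr V v|.

Definition isK23 (V : {set T}) : Prop :=
  exists A B : {set T},
    [/\ #|A| = 2, #|B| = 3, [disjoint A & B], V = A :|: B &
        forall u v, u \in V -> v \in V ->
          e u v = ((u \in A) && (v \in B)) || ((u \in B) && (v \in A))].

Definition good_triple (V : {set T}) (r x y : T) : Prop :=
  [/\ [/\ r \in V, x \in V & y \in V],
      [/\ r != x, r != y & x != y] &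
      [/\ deg V r = 2, deg V x = 2 & deg V y = 2]].

(* G[V'] is obtained from G[V] by one construction step at (x, y).
   Since every added edge is incident to a new vertex, each G_i is the
   induced subgraph of the final graph on its vertex set. *)
Definition step (V V' : {set T}) (x y : T) : Prop :=
  if ~~ e x y then
    exists a b : T,
      [/\ [/\ a \notin V, b \notin V & a != b],
          V' = V :|: [set a; b],
          nbr V' a = [set x; b] & nbr V' b = [set a; y]]
  else
    (exists v w : T,
      [/\ v \notin V, w \in [set x; y], V' = v |: V & nbr V' v = nbr V w])
    \/
    (exists a b c d : T,
      [/\ [/\ a \notin V, b \notin V, c \notin V & d \notin V],
          uniq [:: a; b; c; d],
          V' = V :|: [set a; b; c; d] &
          [/\ nbr V' a = [set b; d; x], nbr V' b = [set a; c],
              nbr V' c = [set b; d; y] & nbr V' d = [set a; c]]]).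

Definition exceptional_root (r : T) : Prop :=
  exists (n : nat) (Vs : nat -> {set T}) (xs ys : nat -> T),
    [/\ isK23 (Vs 0%N), Vs n = setT,
        (forall i, i <= n -> good_triple (Vs i) r (xs i) (ys i)) &
        (forall i, i < n -> step (Vs i) (Vs i.+1) (xs i) (ys i))].

Definition exceptional : Prop := exists r : T, exceptional_root r.

End Exceptional.

From mathcomp Require Import all_boot.
Set Implicit Arguments. Unset Strict Implicit. Unset Printing Implicit Defensive.

(* Induction along the construction sequence G_0, ..., G_n with a stronger
   invariant: besides having no cycle of length divisible by 3, each G_i has
   minimum degree 2 and at most two degree-2 vertices other than the root
   (hence exactly x_i and y_i), and if x_i, y_i are non-adjacent then no
   x_i-y_i path has length divisible by 3.
   Two twins of degree 2 on a common cycle span a 4-cycle, and a cycle through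
   only one of them can be rerouted through the other.  Hence in step (2) the
   only genuinely new cycles are 4-cycles and the cycles b a x ... y c through
   the new 4-cycle abcd, which are 3 longer than the x-y path x ... y closed
   by the edge xy.  In step (1) a new cycle is an old y-x path plus 3 edges.
   The new degree-2 vertices are adjacent after step (1) and twins after
   step (2); a path between twins closes into a cycle of the same length,
   which restores the path condition. *)

Lemma dvdn3S3 n : (3 %| n.+3) = (3 %| n).
Proof. by rewrite -[n.+3]addn3 dvdn_addl. Qed.

Lemma leq_card_set2 (T : finType) (A : {set T}) s t : A \subset [set s; t] -> #|A| <= 2.
Proof. by move/subset_leq_card/leq_trans; apply; rewrite cards2; case: (s != t). Qed.

Lemma cards3 (T : finType) (u v z : T) : uniq [:: u; v; z] -> #|[set u; v; z]| = 3.
Proof.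
rewrite /= !inE negb_or => /andP[/andP[uv uz] /andP[vz _]].
by rewrite setUC cardsU1 cards2 uv !inE negb_or eq_sym uz eq_sym vz.
Qed.

Section CycleSeq.
Variables (T : eqType) (e : rel T).
Hypotheses (e_sym : symmetric e) (e_irr : irreflexive e).
Implicit Types (a v w : T) (p q s : seq T).

Lemma cycle_cons a s : cycle e (a :: s) = path e a s && e (last a s) a.
Proof. by rewrite /= rcons_path. Qed.

Lemma cycle_rot_to p a : cycle e p -> a \in p ->
  exists q, perm_eq p (a :: q) /\ cycle e (a :: q).
Proof.
move=> cp /rot_to[i q rot_p]; exists q.
by rewrite -rot_p rot_cycle perm_sym perm_rot.
Qed.

Lemma cycle_rev_tail a q : cycle e (a :: q) -> cycle e (a :: rev q).
Proof.
move=> cq; rewrite -(rot_cycle 1) rot1_cons -rev_cons rev_cycle.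
by rewrite (@eq_cycle _ _ e) // => x y; rewrite e_sym.
Qed.

Lemma cycle_cons_subst v w q : (forall z, z \in q -> e v z = e w z) ->
  cycle e (v :: q) = cycle e (w :: q).
Proof.
case: q => [|z q] evw; first by rewrite /= !e_irr.
by rewrite !cycle_cons /= evw ?mem_head // ![e (last z q) _]e_sym evw ?mem_last.
Qed.

Lemma cycle_two_nbrs p a : uniq p -> 3 <= size p -> cycle e p -> a \in p ->
  exists z t, [/\ z \in p, t \in p, z != t, e a z & e a t].
Proof.
move=> up p3 cp ap; have [q [pq cq]] := cycle_rot_to cp ap.
move: up p3 cq; rewrite (perm_uniq pq) (perm_size pq).
case: q pq => [|z q] pq //; case/lastP: q pq => [|m t] pq // up _.
rewrite cycle_cons /= last_rcons => /andP[/andP[az _] ta].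
exists z, t; split; last by rewrite e_sym.
- by rewrite (perm_mem pq) !inE eqxx orbT.
- by rewrite (perm_mem pq) !inE mem_rcons inE eqxx !orbT.
- by move: up => /and3P[_ + _]; rewrite mem_rcons inE negb_or => /andP[].
- by [].
Qed.

End CycleSeq.

Section Graph.
Variables (T : finType) (e : rel T).
Hypotheses (e_sym : symmetric e) (e_irr : irreflexive e).
Implicit Types (V W N : {set T}) (p q : seq T).

Definition cycle_in V p := [/\ uniq p, {subset p <= V}, 3 <= size p & cycle e p].

Lemma in_nbr V u z : (z \in nbr e V u) = (z \in V) && e u z.
Proof. by rewrite inE. Qed.

Lemma nbr_adj V u z : z \in nbr e V u -> e u z.
Proof. by rewrite in_nbr => /andP[]. Qed.

Lemma nbr_subset V W u : V \subset W -> nbr e V u \subset nbr e W u.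
Proof.
by move=> VW; apply/subsetP => z; rewrite !in_nbr => /andP[/(subsetP VW) -> ->].
Qed.

Lemma subset_setU_notin V N (s : seq T) :
  {subset s <= V :|: N} -> (forall z, z \in N -> z \notin s) -> {subset s <= V}.
Proof.
move=> sVN Ns z zs; have /setUP[//|zN] := sVN z zs.
by rewrite (negbTE (Ns z zN)) in zs.
Qed.

Lemma cycle_in_perm V p p' : cycle_in V p -> perm_eq p p' -> cycle e p' -> cycle_in V p'.
Proof.
case=> up sp p3 _ pp' cp'; split=> //; rewrite -?(perm_uniq pp') -?(perm_size pp') //.
by move=> z; rewrite -(perm_mem pp'); apply: sp.
Qed.

Lemma cycle_in_not_through V p a t :
  cycle_in V p -> (forall z, z \in p -> z \in nbr e V a -> z = t) -> a \notin p.
Proof.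
case=> up sp p3 cp Na; apply/negP => ap.
have [z [t' [zp t'p zt' az at']]] := cycle_two_nbrs e_sym up p3 cp ap.
have Ez : z = t by apply: Na; rewrite // in_nbr sp.
have Et' : t' = t by apply: Na; rewrite // in_nbr sp.
by rewrite Ez Et' eqxx in zt'.
Qed.

Lemma cycle_in_through V p a b c : cycle_in V p -> a \in p -> nbr e V a \subset [set b; c] ->
  exists q, perm_eq p [:: a, b & rcons q c] /\ cycle_in V [:: a, b & rcons q c].
Proof.
move=> cyc_p ap Na; have [_ _ _ cp] := cyc_p; have [q [pq cq]] := cycle_rot_to cp ap.
have [uq sq q3 _] := cycle_in_perm cyc_p pq cq.
case: q => [|z q] in pq cq uq sq q3 *; first by [].
case/lastP: q => [|m t] in pq cq uq sq q3 *; first by [].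
move: (cq); rewrite cycle_cons /= last_rcons => /andP[/andP[az _] ta].
have zt : z != t by move: uq => /and3P[_ + _]; rewrite mem_rcons inE negb_or => /andP[].
have zbc : z \in [set b; c].
  by apply: (subsetP Na); rewrite in_nbr sq ?az // !inE eqxx orbT.
have tbc : t \in [set b; c].
  by apply: (subsetP Na); rewrite in_nbr e_sym ta sq // !inE mem_rcons inE eqxx !orbT.
case/set2P: zbc => Ez; case/set2P: tbc => Et; subst z t; rewrite ?eqxx // in zt.
- by exists m; split; last exact: cycle_in_perm cyc_p pq cq.
have revE : [:: a, b & rcons (rev m) c] = a :: rev [:: c & rcons m b].
  by rewrite rev_cons rev_rcons.
exists (rev m); rewrite revE; have pq' : perm_eq p (a :: rev [:: c & rcons m b]).
  by rewrite (perm_trans pq) // perm_cons perm_sym perm_rev.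
by split; last exact: cycle_in_perm cyc_p pq' (cycle_rev_tail e_sym cq).
Qed.

Lemma cycle_in_twin_swap V p v w : cycle_in V p -> v \in p -> w \notin p -> w \in V ->
  nbr e V v = nbr e V w -> exists q, perm_eq p (v :: q) /\ cycle_in V (w :: q).
Proof.
move=> cyc_p vp wp wV Nvw; have [_ _ _ cp] := cyc_p.
have [q [pq cq]] := cycle_rot_to cp vp.
have [uq sq q3 _] := cycle_in_perm cyc_p pq cq.
have qV z : z \in q -> z \in V by move=> zq; apply: sq; rewrite inE zq orbT.
exists q; split=> //; split=> //.
- move: uq; rewrite !cons_uniq => /andP[_ ->]; rewrite andbT; apply: contra wp => wq.
  by rewrite (perm_mem pq) inE wq orbT.
- by move=> z; rewrite inE => /predU1P[->|/qV].
- rewrite -(cycle_cons_subst e_sym e_irr (v := v)) // => z zq.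
  by move/setP: Nvw => /(_ z); rewrite !in_nbr qV.
Qed.

Lemma cycle_in_twins V p v w s1 s2 : cycle_in V p -> v \in p -> w \in p -> v != w ->
  nbr e V v = [set s1; s2] -> nbr e V w = [set s1; s2] -> size p = 4.
Proof.
move=> cyc_p vp wp vw Nv Nw.
have Nv_sub : nbr e V v \subset [set s1; s2] by rewrite Nv.
have [q [pq [uq sq _ cq]]] := cycle_in_through cyc_p vp Nv_sub.
have ws : w \notin [set s1; s2] by rewrite -Nw in_nbr e_irr andbF.
have wq : w \in q.
  move: wp; rewrite (perm_mem pq) !inE mem_rcons inE (eq_sym w v) (negbTE vw).
  by move: ws; rewrite !inE negb_or => /andP[/negbTE-> /negbTE->].
have [s1q s2q] : s1 \notin q /\ s2 \notin q.
  move: uq; rewrite !cons_uniq rcons_uniq mem_rcons inE negb_or.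
  by case/and3P=> _ /andP[_ ->] /andP[->].
have not_wnbr z : z \in q -> ~~ e w z.
  move=> zq; apply/negP => wz.
  have : z \in nbr e V w by rewrite in_nbr wz sq // !inE mem_rcons inE zq !orbT.
  by rewrite Nw => /set2P[] Ez; rewrite -Ez zq in s1q s2q.
rewrite (perm_size pq); case/splitPr: wq => l m in cq s1q s2q not_wnbr *.
move: cq; rewrite cycle_cons /= rcons_cat cat_path /= => /andP[/and4P[_ _ lw wm] _].
have -> : l = [::].
  case/lastP: l lw not_wnbr {s1q s2q} => [//|l t]; rewrite last_rcons => tw nw.
  by have := nw t; rewrite e_sym tw mem_cat mem_rcons mem_head => /(_ isT).
case: m wm not_wnbr {s1q s2q} => [//|z m] /= /andP[wz _] nw.
by have := nw z; rewrite wz mem_cat !inE eqxx !orbT => /(_ isT).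
Qed.

Lemma path_parity V (A : {set T}) u q :
  {in V &, forall v z, e v z -> (z \in A) = (v \notin A)} ->
  {subset u :: q <= V} -> path e u q -> (last u q \in A) = (u \in A) (+) odd (size q).
Proof.
move=> flip; elim: q u => [|z q IH] u sq /=; first by rewrite addbF.
case/andP=> uz pq; have sq' : {subset z :: q <= V} by move=> w wq; apply: sq; rewrite inE wq orbT.
rewrite (IH z sq' pq) (flip u z) ?sq ?mem_head ?inE ?eqxx ?orbT //.
by case: (u \in A); case: (odd _).
Qed.

Section Invariant.
Variable r : T.

Definition deg2_verts V := [set u in V | (u != r) && (deg e V u == 2)].

Definition cycles_not_div3 V := forall p, cycle_in V p -> ~~ (3 %| size p).

Definition deg2_paths_not_div3 V := forall u q, uniq (u :: q) -> {subset u :: q <= V} ->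
  path e u q -> u \in deg2_verts V -> last u q \in deg2_verts V -> u != last u q ->
  ~~ e u (last u q) -> ~~ (3 %| size q).

Definition mindeg2 V := forall u, u \in V -> 2 <= deg e V u.

Definition exceptional_inv V :=
  [/\ cycles_not_div3 V, deg2_paths_not_div3 V, #|deg2_verts V| <= 2 & mindeg2 V].

Lemma deg2_paths_not_div3_adj V s t :
  deg2_verts V \subset [set s; t] -> e s t -> deg2_paths_not_div3 V.
Proof.
move=> Dst est u q _ _ _ uD lD ul; apply: contraR => _.
move: (subsetP Dst _ uD) (subsetP Dst _ lD) ul.
by move=> /set2P[]-> /set2P[]->; rewrite ?eqxx // e_sym.
Qed.

Lemma deg2_paths_not_div3_twins V s t : deg2_verts V \subset [set s; t] ->
  nbr e V s = nbr e V t -> cycles_not_div3 V -> deg2_paths_not_div3 V.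
Proof.
move=> Dst Nst cfree u q uq sq pq uD lD ul nul.
have Nul : nbr e V u = nbr e V (last u q).
  move: (subsetP Dst _ uD) (subsetP Dst _ lD) ul.
  by move=> /set2P[]-> /set2P[]->; rewrite ?eqxx.
case/lastP: q uq sq pq Nul ul nul {lD} => [|q l]; first by rewrite eqxx.
rewrite last_rcons rcons_path -rcons_cons rcons_uniq size_rcons.
move=> /andP[_ uq] sq /andP[pq ql] Nul _ nul.
case: q => [|z [|z' q]] in uq sq pq ql *; [by rewrite ql in nul | by [] |].
apply: (cfree [:: u, z, z' & q]); split=> //.
- by move=> w wq; apply: sq; rewrite mem_rcons inE wq orbT.
- rewrite cycle_cons pq e_sym; have : last u [:: z, z' & q] \in nbr e V l.
    by rewrite in_nbr e_sym ql sq // mem_rcons inE mem_last orbT.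
  by rewrite -Nul => /nbr_adj.
Qed.

Lemma deg2_verts_good V x y :
  #|deg2_verts V| <= 2 -> good_triple e V r x y -> deg2_verts V = [set x; y].
Proof.
move=> D2 [[_ xV yV] [rx ry xy] [_ dx dy]].
have xyD : [set x; y] \subset deg2_verts V.
  by apply/subsetP => u /set2P[]->; rewrite inE ?xV ?yV eq_sym ?rx ?ry ?dx ?dy.
by apply/esym/eqP; rewrite eqEcard xyD cards2 xy.
Qed.

Lemma deg2_verts_grow V W u : mindeg2 V -> V \subset W -> u \in V ->
  u \in deg2_verts W -> u \in deg2_verts V /\ nbr e W u = nbr e V u.
Proof.
move=> m2 VW uV /setIdP[_ /andP[ur /eqP dW]].
have NWV : nbr e W u = nbr e V u.
  apply/esym/eqP; rewrite eqEcard nbr_subset //.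
  by move: dW (m2 u uV); rewrite /deg => ->.
by split=> //; rewrite inE uV ur /deg -NWV; apply/eqP.
Qed.

Lemma step_deg2_old V W x y u : exceptional_inv V -> good_triple e V r x y -> V \subset W ->
  u \in V -> u \in deg2_verts W ->
  u \in [set x; y] /\ (forall z, z \in W -> z \notin V -> ~~ e u z).
Proof.
case=> _ _ D2 m2 gt VW uV uD; have [uDV NWV] := deg2_verts_grow m2 VW uV uD.
split; first by rewrite -(deg2_verts_good D2 gt).
move=> z zW zV; apply: contra zV => uz.
have : z \in nbr e W u by rewrite in_nbr zW uz.
by rewrite NWV in_nbr => /andP[].
Qed.

Lemma mindeg2_grow V W : mindeg2 V -> V \subset W ->
  (forall u, u \in W -> u \notin V -> 2 <= deg e W u) -> mindeg2 W.
Proof.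
move=> m2 VW new u uW; have [uV|] := boolP (u \in V); last exact: new.
by rewrite (leq_trans (m2 u uV)) // subset_leq_card // nbr_subset.
Qed.

Section PathStep.
Variables (V W : {set T}) (x y a b : T).
Hypotheses (invV : exceptional_inv V) (gt : good_triple e V r x y) (nxy : ~~ e x y).
Hypotheses (aV : a \notin V) (bV : b \notin V).
Hypothesis defW : W = V :|: [set a; b].
Hypotheses (Na : nbr e W a = [set x; b]) (Nb : nbr e W b = [set a; y]).

Let VW : V \subset W. Proof. by rewrite defW subsetUl. Qed.
Let aW : a \in W. Proof. by rewrite defW !inE eqxx orbT. Qed.
Let bW : b \in W. Proof. by rewrite defW !inE eqxx !orbT. Qed.
Let DV : deg2_verts V = [set x; y].
Proof. by case: invV => _ _ D2 _; apply: deg2_verts_good. Qed.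
Let xV : x \in V. Proof. by case: gt => [[]]. Qed.
Let yV : y \in V. Proof. by case: gt => [[]]. Qed.
Let xy : x != y. Proof. by case: gt => _ []. Qed.

Lemma path_step_deg2 : deg2_verts W \subset [set a; b].
Proof.
apply/subsetP => u uD; have uW : u \in W by case/setIdP: uD.
have [uV|uV] := boolP (u \in V); last by move: uW; rewrite defW inE (negbTE uV).
have [/set2P[]-> old] := step_deg2_old invV gt VW uV uD.
- by have := old a aW aV; rewrite e_sym (@nbr_adj W) // Na set21.
- by have := old b bW bV; rewrite e_sym (@nbr_adj W) // Nb set22.
Qed.

Lemma path_step_cycles_not_div3 : cycles_not_div3 W.
Proof.
case: invV => cfree pfree _ _ p cyc_p.
have [ap|ap] := boolP (a \in p); last first.
  have bp : b \notin p.
    apply: (cycle_in_not_through (t := y) cyc_p) => z zp; rewrite Nb => /set2P[Ez|//].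
    by rewrite -Ez zp in ap.
  case: cyc_p => up sp p3 cp; apply: (cfree p); split=> //.
  apply: subset_setU_notin (_ : {subset p <= V :|: [set a; b]}) _; first by rewrite -defW.
  by move=> z /set2P[]->.
have Na' : nbr e W a \subset [set b; x] by rewrite Na setUC.
have [q [pq [uq sq _ cq]]] := cycle_in_through cyc_p ap Na'; rewrite (perm_size pq).
case: q => [|z m] in pq uq sq cq *.
  move: cq => /and3P[_ bx _]; have : x \in nbr e W b by rewrite in_nbr (subsetP VW) ?bx.
  by rewrite Nb => /set2P[] E; [move: aV; rewrite -E xV | move: xy; rewrite E eqxx].
move: cq; rewrite cycle_cons /= => /andP[/and3P[_ bz pz] _].
case/andP: uq; rewrite inE negb_or => /andP[_ a_q] /andP[b_q uq].
have Ez : z = y.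
  have : z \in nbr e W b by rewrite in_nbr bz sq // !inE eqxx !orbT.
  by rewrite Nb => /set2P[] // Eza; rewrite Eza mem_head in a_q.
subst z; rewrite /= dvdn3S3; apply: (pfree y (rcons m x)) => //.
- apply: subset_setU_notin (_ : {subset _ <= V :|: [set a; b]}) _.
    by rewrite -defW => w wq; apply: sq; rewrite in_cons (in_cons b) wq !orbT.
  by move=> w /set2P[]->.
- by rewrite DV set22.
- by rewrite last_rcons DV set21.
- by rewrite last_rcons eq_sym.
- by rewrite last_rcons e_sym.
Qed.

Lemma path_step_inv : exceptional_inv W.
Proof.
case: invV => _ _ _ m2; split.
- exact: path_step_cycles_not_div3.
- by apply: (deg2_paths_not_div3_adj path_step_deg2); rewrite (@nbr_adj W) // Na set22.
- exact: leq_card_set2 path_step_deg2.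
- apply: mindeg2_grow m2 VW _ => u uW uV.
  have : u \in [set a; b] by move: uW; rewrite defW inE (negbTE uV).
  case/set2P=> ->.
  + by rewrite /deg Na cards2; case: eqP => // Exb; move: bV; rewrite -Exb xV.
  + by rewrite /deg Nb cards2; case: eqP => // Eay; move: aV; rewrite Eay yV.
Qed.

End PathStep.

Section TwinStep.
Variables (V W : {set T}) (x y v w : T).
Hypotheses (invV : exceptional_inv V) (gt : good_triple e V r x y) (exy : e x y).
Hypotheses (vV : v \notin V) (wxy : w \in [set x; y]) (defW : W = v |: V).
Hypothesis Nv : nbr e W v = nbr e V w.

Let VW : V \subset W. Proof. by rewrite defW subsetUr. Qed.
Let vW : v \in W. Proof. by rewrite defW setU11. Qed.
Let wV : w \in V. Proof. by case: gt => [[_ xV yV] _ _]; case/set2P: wxy => ->. Qed.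
Let dw : deg e V w = 2. Proof. by case: gt => _ _ [_ dx dy]; case/set2P: wxy => ->. Qed.

Let adj_v z : z \in V -> e v z = e w z.
Proof. by move=> zV; move/setP: Nv => /(_ z); rewrite !in_nbr zV (subsetP VW). Qed.

Let Nw : nbr e W w = nbr e V w.
Proof.
apply/setP => z; rewrite !in_nbr defW !inE.
case: eqVneq => [->|_] //=; rewrite (negbTE vV) e_sym.
by move/setP: Nv => /(_ w); rewrite !in_nbr e_irr (subsetP VW) ?andbF.
Qed.

Lemma twin_step_deg2 : deg2_verts W \subset [set v; w].
Proof.
apply/subsetP => u uD; have uW : u \in W by case/setIdP: uD.
have [uV|uV] := boolP (u \in V); last by move: uW; rewrite defW !inE (negbTE uV) orbF => ->.
have [uxy old] := step_deg2_old invV gt VW uV uD.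
have [->|uw] := eqVneq u w; first exact: set22.
have wu : e w u.
  by move: uxy wxy uw; do 2!case/set2P=> ->; rewrite ?eqxx // e_sym.
by have := old v vW vV; rewrite e_sym adj_v // wu.
Qed.

Lemma twin_step_cycles_not_div3 : cycles_not_div3 W.
Proof.
case: invV => cfree _ _ _ p cyc_p.
have old q : cycle_in W q -> v \notin q -> ~~ (3 %| size q).
  case=> uq sq q3 cq vq; apply: (cfree q); split=> //.
  apply: subset_setU_notin (_ : {subset q <= V :|: [set v]}) _.
    by rewrite setUC -defW.
  by move=> z /set1P->.
have [vp|] := boolP (v \in p); last exact: old.
have vw : v != w by apply: contraNneq vV => ->.
have [wp|wp] := boolP (w \in p).
  have [s1 [s2 [_ Nws]]] : exists s1 s2, s1 != s2 /\ nbr e V w = [set s1; s2].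
    by apply/cards2P/eqP; exact: dw.
  by rewrite (cycle_in_twins cyc_p vp wp vw (etrans Nv Nws) (etrans Nw Nws)).
have [q [pq cyc_wq]] := cycle_in_twin_swap cyc_p vp wp (subsetP VW _ wV) (etrans Nv (esym Nw)).
have /andP[vq _] : uniq (v :: q) by rewrite -(perm_uniq pq); case: cyc_p.
by rewrite (perm_size pq); apply: old cyc_wq _; rewrite inE negb_or vw.
Qed.

Lemma twin_step_inv : exceptional_inv W.
Proof.
case: invV => _ _ _ m2; have twins : nbr e W v = nbr e W w by rewrite Nv Nw.
split.
- exact: twin_step_cycles_not_div3.
- exact: deg2_paths_not_div3_twins twin_step_deg2 twins twin_step_cycles_not_div3.
- exact: leq_card_set2 twin_step_deg2.
- apply: mindeg2_grow m2 VW _ => u uW uV.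
  by move: uW; rewrite {1}defW !inE (negbTE uV) orbF => /eqP->; rewrite /deg Nv -/(deg e V w) dw.
Qed.

End TwinStep.

Section SquareStep.
Variables (V W : {set T}) (x y a b c d : T).
Hypotheses (invV : exceptional_inv V) (gt : good_triple e V r x y) (exy : e x y).
Hypotheses (aV : a \notin V) (bV : b \notin V) (cV : c \notin V) (dV : d \notin V).
Hypotheses (abcd : uniq [:: a; b; c; d]) (defW : W = V :|: [set a; b; c; d]).
Hypotheses (Na : nbr e W a = [set b; d; x]) (Nb : nbr e W b = [set a; c]).
Hypotheses (Nc : nbr e W c = [set b; d; y]) (Nd : nbr e W d = [set a; c]).

Let VW : V \subset W. Proof. by rewrite defW subsetUl. Qed.
Let xV : x \in V. Proof. by case: gt => [[]]. Qed.
Let yV : y \in V. Proof. by case: gt => [[]]. Qed.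
Let xy : x != y. Proof. by case: gt => _ []. Qed.
Let aW : a \in W. Proof. by rewrite defW !inE eqxx !orbT. Qed.
Let bW : b \in W. Proof. by rewrite defW !inE eqxx !orbT. Qed.
Let cW : c \in W. Proof. by rewrite defW !inE eqxx !orbT. Qed.
Let new_distinct : [/\ a != c, b != c, b != d & c != d].
Proof.
by move: abcd; rewrite /= !inE !negb_or => /and4P[/and3P[_ -> _] /andP[-> ->] -> _].
Qed.
Let neq_old u z : u \in V -> z \notin V -> z != u.
Proof. by move=> uV; apply: contraNneq => ->. Qed.

Let deg_a : deg e W a = 3.
Proof.
have [_ _ bd _] := new_distinct.
by rewrite /deg Na cards3 //= !inE negb_or bd (neq_old xV bV) (neq_old xV dV).
Qed.

Let deg_c : deg e W c = 3.
Proof.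
have [_ _ bd _] := new_distinct.
by rewrite /deg Nc cards3 //= !inE negb_or bd (neq_old yV bV) (neq_old yV dV).
Qed.

Lemma square_step_deg2 : deg2_verts W \subset [set b; d].
Proof.
apply/subsetP => u uD; have [uW /andP[_ /eqP du]] := setIdP uD.
have [uV|uV] := boolP (u \in V).
  have [/set2P[]-> old] := step_deg2_old invV gt VW uV uD.
  - by have := old a aW aV; rewrite e_sym (@nbr_adj W) // Na !inE eqxx !orbT.
  - by have := old c cW cV; rewrite e_sym (@nbr_adj W) // Nc !inE eqxx !orbT.
have : u \in [set a; b; c; d] by move: uW; rewrite {1}defW inE (negbTE uV).
rewrite !inE -!orbA => /or4P[] /eqP Eu; subst u; rewrite ?eqxx ?orbT //.
- by rewrite deg_a in du.
- by rewrite deg_c in du.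
Qed.

Lemma square_step_cycle_shape p : cycle_in W p -> b \in p -> d \notin p ->
  exists m, [/\ size p = (size m).+4, uniq (x :: m), {subset x :: m <= V},
                path e x m & last x m = y].
Proof.
move=> cyc_p bp dp; have [_ bc _ cd] := new_distinct.
have Nb' : nbr e W b \subset [set a; c] by rewrite Nb.
have [q [pq [uq sq _ cq]]] := cycle_in_through cyc_p bp Nb'.
have d_q : d \notin [:: b, a & rcons q c] by rewrite -(perm_mem pq).
rewrite (perm_size pq); case: q => [|z m] in pq uq sq cq d_q *.
  move: cq; rewrite cycle_cons /= => /andP[/and3P[_ ac _] _].
  have : c \in nbr e W a by rewrite in_nbr cW ac.
  by rewrite Na !inE (eq_sym c b) (negbTE bc) (negbTE cd) (negbTE (neq_old xV cV)).
move: cq; rewrite cycle_cons /= rcons_path => /andP[/and4P[_ az pzm zmc] _].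
move: uq; rewrite [uniq (b :: _)]cons_uniq [uniq (a :: _)]cons_uniq -rcons_cons rcons_uniq.
move=> /and3P[b_q a_q /andP[c_q uq]].
have Ez : z = x.
  have : z \in nbr e W a by rewrite in_nbr az sq // !inE eqxx !orbT.
  rewrite Na !inE -orbA => /or3P[] /eqP // Ez.
  - by move: b_q; rewrite Ez mem_rcons !inE eqxx !orbT.
  - by move: d_q; rewrite Ez !inE eqxx !orbT.
subst z; have mem_xm w : w \in x :: m -> w \in [:: b, a & rcons (x :: m) c].
  by move=> wm; rewrite (in_cons b) (in_cons a) mem_rcons (in_cons c) wm !orbT.
have El : last x m = y.
  have : last x m \in nbr e W c by rewrite in_nbr e_sym zmc sq // mem_xm // mem_last.
  rewrite Nc !inE -orbA => /or3P[] /eqP // El.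
  - by move: b_q; rewrite -El mem_rcons (in_cons c) (in_cons a) mem_last !orbT.
  - by move: d_q; rewrite -El mem_xm // mem_last.
exists m; split=> //; first by rewrite size_rcons.
apply: subset_setU_notin (_ : {subset x :: m <= V :|: [set a; b; c; d]}) _.
  by rewrite -defW => w /mem_xm /sq.
move=> w w_new; apply/negP => wm; move: w_new; rewrite !inE -!orbA.
case/or4P=> /eqP Ew; subst w.
- by move: a_q; rewrite mem_rcons (in_cons c) wm orbT.
- by move: b_q; rewrite mem_rcons (in_cons c) (in_cons a) wm !orbT.
- by rewrite wm in c_q.
- by rewrite mem_xm in d_q.
Qed.

Lemma square_step_cycles_not_div3 : cycles_not_div3 W.
Proof.
case: invV => cfree _ _ _; have [_ _ bd _] := new_distinct.
have through_b p : cycle_in W p -> b \in p -> d \notin p -> ~~ (3 %| size p).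
  move=> cyc_p bp dp; have [m [-> um sm pm lm]] := square_step_cycle_shape cyc_p bp dp.
  case: m => [|z [|z' m]] in um sm pm lm *; first by move: xy; rewrite -lm eqxx.
    by [].
  rewrite dvdn3S3; apply: (cfree [:: x, z, z' & m]); split=> //.
  by rewrite cycle_cons pm lm e_sym.
move=> p cyc_p; have [bp|bp] := boolP (b \in p); have [dp|dp] := boolP (d \in p).
- by rewrite (cycle_in_twins cyc_p bp dp bd Nb Nd).
- exact: through_b.
- have [q [pq cyc_bq]] := cycle_in_twin_swap cyc_p dp bp bW (etrans Nd (esym Nb)).
  have /andP[dq _] : uniq (d :: q) by rewrite -(perm_uniq pq); case: cyc_p.
  rewrite (perm_size pq); apply: through_b cyc_bq (mem_head _ _) _.
  by rewrite inE negb_or eq_sym bd dq.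
have ap : a \notin p.
  apply: (cycle_in_not_through (t := x) cyc_p) => z zp.
  by rewrite Na !inE -orbA => /or3P[] /eqP Ez //; rewrite -Ez zp in bp dp.
have cp : c \notin p.
  apply: (cycle_in_not_through (t := y) cyc_p) => z zp.
  by rewrite Nc !inE -orbA => /or3P[] /eqP Ez //; rewrite -Ez zp in bp dp.
case: cyc_p => up sp p3 cyc_p; apply: (cfree p); split=> //.
apply: subset_setU_notin (_ : {subset p <= V :|: [set a; b; c; d]}) _; first by rewrite -defW.
by move=> z; rewrite !inE -!orbA => /or4P[] /eqP->.
Qed.

Lemma square_step_inv : exceptional_inv W.
Proof.
case: invV => _ _ _ m2; have [ac _ _ _] := new_distinct.
split.
- exact: square_step_cycles_not_div3.
- by apply: (deg2_paths_not_div3_twins square_step_deg2 _ square_step_cycles_not_div3); rewrite Nb Nd.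
- exact: leq_card_set2 square_step_deg2.
- apply: mindeg2_grow m2 VW _ => u uW uV.
  have : u \in [set a; b; c; d] by move: uW; rewrite {1}defW inE (negbTE uV).
  by rewrite !inE -!orbA => /or4P[] /eqP->; rewrite ?deg_a ?deg_c // /deg ?Nb ?Nd cards2 ac.
Qed.

End SquareStep.

Lemma step_inv V W x y :
  exceptional_inv V -> good_triple e V r x y -> step e V W x y -> exceptional_inv W.
Proof.
move=> invV gt; rewrite /step; case: ifPn => [nxy | /negPn exy].
  by case=> a [b [[aV bV _] defW Na Nb]]; apply: (path_step_inv invV gt nxy aV bV defW Na Nb).
case=> [[v [w [vV wxy defW Nv]]] | [a [b [c [d [[aV bV cV dV] abcd defW [Na Nb Nc Nd]]]]]]].
  exact: (twin_step_inv invV gt exy vV wxy defW Nv).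
exact: (square_step_inv invV gt exy aV bV cV dV abcd defW Na Nb Nc Nd).
Qed.

Section K23.
Variables (V A B : {set T}).
Hypotheses (cardA : #|A| = 2) (cardB : #|B| = 3) (disAB : [disjoint A & B]).
Hypothesis defV : V = A :|: B.
Hypothesis adjV : forall u v, u \in V -> v \in V ->
  e u v = ((u \in A) && (v \in B)) || ((u \in B) && (v \in A)).

Let inB u : u \in V -> (u \in B) = (u \notin A).
Proof.
rewrite defV => /setUP[uA|uB]; first by rewrite uA (disjointFr disAB uA).
by rewrite uB (disjointFl disAB uB).
Qed.

Let AV : A \subset V. Proof. by rewrite defV subsetUl. Qed.
Let BV : B \subset V. Proof. by rewrite defV subsetUr. Qed.

Let adj_flip : {in V &, forall u z, e u z -> (z \in A) = (u \notin A)}.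
Proof.
move=> u z uV zV; rewrite adjV // !inB //.
by case: (u \in A); case: (z \in A).
Qed.

Let deg_A u : u \in A -> deg e V u = 3.
Proof.
move=> uA; rewrite /deg -cardB; apply: eq_card => z; rewrite in_nbr.
case: (boolP (z \in V)) => zV /=; last by apply/esym/negP => /(subsetP BV); apply/negP.
have uV := subsetP AV u uA.
by rewrite adjV // (inB uV) uA orbF.
Qed.

Let deg_B u : u \in B -> deg e V u = 2.
Proof.
move=> uB; rewrite /deg -cardA; apply: eq_card => z; rewrite in_nbr.
case: (boolP (z \in V)) => zV /=; last by apply/esym/negP => /(subsetP AV); apply/negP.
have uV := subsetP BV u uB.
have uA : (u \in A) = false by apply/negbTE; rewrite -(inB uV).
by rewrite adjV // uB uA.
Qed.

Let size_le5 s : uniq s -> {subset s <= V} -> size s <= 5.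
Proof.
move=> us sV; rewrite -(card_uniqP us).
have -> : 5 = #|V| by rewrite defV cardsU (disjoint_setI0 disAB) cards0 cardA cardB.
by apply/subset_leq_card/subsetP.
Qed.

Lemma K23_cycles_not_div3 : cycles_not_div3 V.
Proof.
case=> [|u q] [uq sq p3 cq] //; move: cq; rewrite cycle_cons => /andP[pq qu].
have uV : u \in V by apply: sq; exact: mem_head.
have lV : last u q \in V by apply: sq; exact: mem_last.
have := path_parity adj_flip sq pq; rewrite (adj_flip lV uV qu).
move: (size_le5 uq sq) p3 => /=.
by case: (last u q \in A); case: (u \in A); case: (size q) => [|[|[|[|[|n]]]]].
Qed.

Lemma K23_deg2_verts : deg2_verts V \subset B.
Proof.
apply/subsetP => u /setIdP[uV /andP[_ /eqP du]]; rewrite inB //.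
by apply/negP => uA; rewrite deg_A in du.
Qed.

Lemma K23_deg2_paths_not_div3 : deg2_paths_not_div3 V.
Proof.
move=> u q uq sq pq uD lD ul _.
have [uB lB] := (subsetP K23_deg2_verts u uD, subsetP K23_deg2_verts _ lD).
have := path_parity adj_flip sq pq.
rewrite -(negbK (_ \in A)) -(negbK (u \in A)) -!inB ?sq ?mem_head ?mem_last // uB lB.
move: (size_le5 uq sq) ul => /=.
by case: q {uq sq pq uD lD uB lB} => [|z q] /=; [rewrite eqxx | case: (size q) => [|[|[|[|n]]]]].
Qed.

Lemma K23_inv : r \in V -> deg e V r = 2 -> exceptional_inv V.
Proof.
move=> rV dr; have rB : r \in B by rewrite inB //; apply/negP => rA; rewrite deg_A in dr.
split.
- exact: K23_cycles_not_div3.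
- exact: K23_deg2_paths_not_div3.
- apply: leq_trans (subset_leq_card (_ : deg2_verts V \subset B :\ r)) _.
    apply/subsetP => u uD; rewrite !inE (subsetP K23_deg2_verts u uD) andbT.
    by case/setIdP: uD => _ /andP[].
  by move: cardB; rewrite (cardsD1 r B) rB add1n => -[->].
- move=> u uV; have [uA|uA] := boolP (u \in A); first by rewrite deg_A.
  by rewrite deg_B // inB.
Qed.

End K23.

End Invariant.

End Graph.

Theorem lemma3p3 (T : finType) (e : rel T)
    (e_sym : symmetric e) (e_irr : irreflexive e) :
  exceptional e ->
  forall p : seq T, uniq p -> 3 <= size p -> cycle e p -> ~~ (3 %| size p).
Proof.
move=> [r [n [Vs [xs [ys [V0 Vn good steps]]]]]] p up p3 cp.
have inv i : i <= n -> exceptional_inv e r (Vs i).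
  elim: i => [_|i IH lt_in].
    have [[rV _ _] _ [dr _ _]] := good 0 isT.
    by case: V0 => A [B [cA cB dAB defV adjV]]; apply: (K23_inv cA cB dAB defV adjV).
  exact: (step_inv e_sym e_irr (IH (ltnW lt_in)) (good i (ltnW lt_in)) (steps i lt_in)).
have [cfree _ _ _] := inv n (leqnn n).
by apply: cfree; split=> // z _; rewrite Vn inE.
Qed.
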